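(* Let $n\ge 3$ and $m\ge 2$, let $K_n$ be the complete graph on $n$ vertices and $C_{2m}$ the cycle graph on $2m$ vertices. Then the set of distinct distance eigenvalues (eigenvalues of the distance matrix) of $K_n\otimes C_{2m}$ consists of the numbers $2(n+1)+nm^2$; $2(n-1)+4\cos\left(\frac{2p\pi}{m}\right)$ for $p=1,2,\ldots,m-1$; $2(n-1)+4\cos\left(\frac{(2q-1)\pi}{m}\right)-n\,\mathrm{cosec}^{2}\left(\frac{(2q-1)\pi}{2m}\right)$ for $q=1,2,\ldots,m$; $4\cos\left(\frac{\pi}{m}r\right)-2$ for $r=0,1,\ldots,2m-1$.
   Context: The Kronecker product $G\otimes H$ of simple graphs $G,H$ has vertex set $V(G)\times V(H)$, with $(x,y)$ adjacent to $(u,v)$ if and only if $xu\in E(G)$ and $yv\in E(H)$. The distance matrix of a connected graph has $(u,v)$ entry equal to the length of a shortest $u$–$v$ path. *)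

From HB Require Import structures.
From mathcomp Require Import all_boot all_order all_algebra.
From mathcomp Require Import all_classical all_reals all_analysis.
Set Implicit Arguments. Unset Strict Implicit. Unset Printing Implicit Defensive.
Import Order.TTheory GRing.Theory Num.Theory.

Definition complete_graph (n : nat) : rel 'I_n := fun i j => i != j.

Definition cycle_graph (k : nat) : rel 'I_k :=
  fun i j => (val j == (val i).+1 %% k) || (val i == (val j).+1 %% k).

Definition kron_graph (T1 T2 : finType) (e1 : rel T1) (e2 : rel T2)
  : rel (T1 * T2)%type :=
  fun u v => e1 u.1 v.1 && e2 u.2 v.2.

Definition walk (T : finType) (e : rel T) (k : nat) (x y : T) : bool :=
  [exists p : k.-tuple T, path e x p && (last x p == y)].

(* graph distance: least k such that a walk of length k from x to y exists
   (a shortest walk is a shortest path).  For disconnected pairs the value is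
   #|T| (irrelevant for connected graphs, where every distance is < #|T|). *)
Definition gdist (T : finType) (e : rel T) (x y : T) : nat :=
  find (fun k => walk e k x y) (iota 0 #|T|).

Definition dist_matrix (R : nzRingType) (T : finType) (e : rel T)
  : 'M[R]_#|T| :=
  \matrix_(i, j) ((gdist e (enum_val i) (enum_val j))%:R)%R.

Arguments complete_graph n : clear implicits.
Arguments cycle_graph k : clear implicits.

From mathcomp Require Import all_boot all_order all_algebra.
From mathcomp Require Import all_classical all_reals all_analysis.
From mathcomp Require Import zify ring lra.
Import Order.TTheory GRing.Theory Num.Theory.
Set Implicit Arguments. Unset Strict Implicit. Unset Printing Implicit Defensive.

(* The distance between (i, j) and (i', j') in K_n x C_2m depends only on
   whether i = i' and on the cyclic distance c of j and j': K_n (n >= 3) has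
   walks of every length k >= 2, and the bipartite cycle has walks of length k
   exactly when k >= c and k = c mod 2.  So the distance matrix is
   J_n (x) A + I_n (x) B with A, B symmetric circulant, and its spectrum is the
   union of the spectra of nA + B and of B.  A symmetric circulant with first
   row g has the eigenvalues sum_k g(k) cos(pi r k / m), r < 2m: an eigenvector
   for any other value is orthogonal to all Fourier modes, hence zero.  For B
   this gives 4 cos(pi r / m) - 2; A reduces to the distance spectrum Delta_r of
   C_2m, which the second difference of k |-> d(k, 0) pins down:
   Delta_0 = m^2, Delta_r = 0 for even r > 0, Delta_r = -1 / sin^2(pi r / 2m) for odd r. *)

Section Walks.
Variables (T : finType) (e : rel T).

Lemma walk0 x : walk e 0 x x.
Proof. by apply/existsP; exists [tuple]; rewrite /= eqxx. Qed.

Lemma walk0E x y : walk e 0 x y -> x = y.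
Proof. by case/existsP => p; rewrite tuple0 /= => /eqP. Qed.

Lemma walkS k x y z : e x y -> walk e k y z -> walk e k.+1 x z.
Proof.
move=> exy /existsP[p /andP[pp lp]]; apply/existsP; exists [tuple of y :: p].
by rewrite /= exy pp.
Qed.

Lemma walkSE k x z : walk e k.+1 x z -> exists2 y, e x y & walk e k y z.
Proof.
case/existsP => p; case/tupleP: p => y p /= /andP[/andP[exy pp] lp].
by exists y => //; apply/existsP; exists p; rewrite pp.
Qed.

Lemma walk_cat k l x y z : walk e k x y -> walk e l y z -> walk e (k + l) x z.
Proof.
elim: k x => [|k IH] x; first by move/walk0E ->.
by case/walkSE => w exw wk wl; rewrite addSn; apply: walkS exw (IH _ wk wl).
Qed.

Lemma walk_sym k x y : symmetric e -> walk e k x y -> walk e k y x.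
Proof.
move=> e_sym; elim: k x => [|k IH] x; first by move/walk0E ->; apply: walk0.
case/walkSE => w exw /IH wk; rewrite -addn1; apply: walk_cat wk _.
by apply: walkS (walk0 _); rewrite e_sym.
Qed.

Lemma gdist_eq k x y :
  walk e k x y -> (forall l, l < k -> ~~ walk e l x y) -> k < #|T| ->
  gdist e x y = k.
Proof.
move=> wk k_min k_lt; rewrite /gdist.
have -> : #|T| = k + (#|T| - k.+1).+1 by lia.
rewrite iotaD find_cat size_iota.
have -> : has (fun l => walk e l x y) (iota 0 k) = false.
  by apply/hasPn => l; rewrite mem_iota => /andP[_ /k_min].
by rewrite /= add0n wk addn0.
Qed.

End Walks.

Lemma walk_kron (T1 T2 : finType) (e1 : rel T1) (e2 : rel T2) k a b c d :
  walk (kron_graph e1 e2) k (a, c) (b, d) = walk e1 k a b && walk e2 k c d.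
Proof.
elim: k a c => [|k IH] a c.
  apply/idP/andP => [/walk0E [-> ->]|[/walk0E -> /walk0E ->]]; last exact: walk0.
  by split; apply: walk0.
apply/idP/andP => [|[/walkSE [a' e1a w1] /walkSE [c' e2c w2]]].
  case/walkSE => -[a' c'] /andP[e1a e2c]; rewrite IH => /andP[w1 w2].
  by split; [apply: walkS e1a w1 | apply: walkS e2c w2].
by apply: (@walkS _ _ _ _ (a', c')); rewrite ?IH ?w1 ?w2 // /kron_graph /= e1a e2c.
Qed.

Lemma walk_complete n k (i i' : 'I_n) : 2 < n ->
  walk (complete_graph n) k i i' = if i == i' then k != 1 else k != 0.
Proof.
move=> n_gt2; elim: k i => [|[|k] IH] i.
- by case: eqP => [->|ne]; [rewrite walk0 | apply/negbTE/negP => /walk0E].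
- apply/idP/idP => [/walkSE [y iy /walk0E <-]|]; first by rewrite (negbTE iy).
  by case: eqP => // /eqP ii' _; apply: walkS ii' (walk0 _ _).
- have [y yi yi'] : exists2 y : 'I_n, y != i & y != i'.
    have : 0 < #|~: [set i; i']| by have := cardsC [set i; i']; rewrite cards2 card_ord; lia.
    by case/card_gt0P => y; rewrite !inE negb_or => /andP[]; exists y.
  rewrite if_same; apply: (walkS (y := y)); first by rewrite /complete_graph eq_sym.
  by rewrite IH (negbTE yi').
Qed.

(* [(j - j') + (j' - j)] is |j - j'| in truncated subtraction. *)
Definition cycle_dist (N j j' : nat) : nat :=
  let d := (j - j') + (j' - j) in minn d (N - d).

Lemma cycle_distC N j j' : cycle_dist N j j' = cycle_dist N j' j.
Proof. rewrite /cycle_dist; lia. Qed.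

Lemma cycle_dist_eq0 N j j' : j < N -> j' < N -> (cycle_dist N j j' == 0) = (j == j').
Proof. move=> *; rewrite /cycle_dist; apply/eqP/eqP; lia. Qed.

Lemma cycle_dist_le N j j' : j < N -> j' < N -> 2 * cycle_dist N j j' <= N.
Proof. move=> *; rewrite /cycle_dist; lia. Qed.

Section CycleWalks.
Variable N : nat.
Hypothesis N_even : ~~ odd N.
Local Notation C := (cycle_graph N).

Lemma cycle_graph_sym : symmetric C.
Proof. by move=> a b; rewrite /cycle_graph orbC. Qed.

Lemma cycle_dist_edge (a b : 'I_N) z : z < N -> C a b ->
  cycle_dist N a z <= (cycle_dist N b z).+1 /\
  odd (cycle_dist N a z + cycle_dist N b z).
Proof.
have modS j : j < N -> j.+1 %% N = if j.+1 == N then 0 else j.+1.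
  by move=> jN; case: eqP => [->|]; rewrite ?modnn // => ?; rewrite modn_small //; lia.
case: a b => a aN [b bN] zN; rewrite /cycle_graph /=.
by case/orP => /eqP ->; rewrite modS //; case: eqP => ?; rewrite /cycle_dist; lia.
Qed.

Lemma walk_cycle_lower k (j j' : 'I_N) : walk C k j j' ->
  cycle_dist N j j' <= k /\ ~~ odd (k + cycle_dist N j j').
Proof.
elim: k j => [|k IH] j; first by move/walk0E ->; rewrite /cycle_dist; lia.
case/walkSE => y /(cycle_dist_edge (ltn_ord j')) [le odd_sum] /IH; lia.
Qed.

Lemma walk_cycle_add k (j j' : 'I_N) : (j + k) %% N = j' -> walk C k j j'.
Proof.
elim: k j => [|k IH] j jk.
  by rewrite addn0 modn_small // in jk; rewrite (val_inj jk); apply: walk0.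
apply: (walkS (y := ordS j)); first by rewrite /cycle_graph eqxx.
by apply: IH; rewrite /= modnDml addSnnS.
Qed.

Lemma walk_cycle_dist (j j' : 'I_N) : walk C (cycle_dist N j j') j j'.
Proof.
wlog le_jj' : j j' / j <= j'.
  move=> wlog_jj'; case: (leqP j j') => [|/ltnW]; first exact: wlog_jj'.
  by move/wlog_jj'; rewrite cycle_distC; apply: walk_sym cycle_graph_sym.
have jN := ltn_ord j; have j'N := ltn_ord j'.
rewrite /cycle_dist /minn; case: ifP => _.
  by apply: walk_cycle_add; rewrite modn_small //; lia.
apply: walk_sym cycle_graph_sym _; apply: walk_cycle_add.
have -> : j' + (N - (j - j' + (j' - j))) = j + N by lia.
by rewrite modnDr modn_small.
Qed.

Lemma walk_cycle_even t (j : 'I_N) : walk C (2 * t) j j.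
Proof.
elim: t => [|t IH]; first exact: walk0.
have jS : C j (ordS j) by rewrite /cycle_graph eqxx.
have Sj : C (ordS j) j by rewrite cycle_graph_sym.
by rewrite mulnS add2n; apply: walkS jS (walkS Sj IH).
Qed.

Lemma walk_cycle k (j j' : 'I_N) :
  walk C k j j' = (cycle_dist N j j' <= k) && ~~ odd (k + cycle_dist N j j').
Proof.
apply/idP/andP => [/walk_cycle_lower [] //|[le even_sum]].
have -> : k = cycle_dist N j j' + 2 * (k - cycle_dist N j j')./2 by lia.
exact: walk_cat (walk_cycle_dist j j') (walk_cycle_even _ j').
Qed.

End CycleWalks.

Lemma cycle_dist_add N (j k : 'I_N) : cycle_dist N ((j + k) %% N) j = cycle_dist N k 0.
Proof.
have jN := ltn_ord j; have kN := ltn_ord k.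
case: (ltnP (j + k) N) => jkN; first by rewrite modn_small // /cycle_dist; lia.
have -> : j + k = (j + k - N) + N by lia.
by rewrite modnDr modn_small /cycle_dist; lia.
Qed.

Lemma cycle_dist_opp N (k : 'I_N) : cycle_dist N ((N - k) %% N) 0 = cycle_dist N k 0.
Proof.
have kN := ltn_ord k; case: (posnP k) => [->|k_gt0]; first by rewrite subn0 modnn.
by rewrite modn_small /cycle_dist; lia.
Qed.

Definition same_dist (c : nat) : nat := if c == 0 then 0 else if c == 1 then 3 else c.
Definition diff_dist (c : nat) : nat := if c == 0 then 2 else c.

Lemma gdist_kron_complete_cycle n N (i i' : 'I_n) (j j' : 'I_N) :
  2 < n -> ~~ odd N ->
  gdist (kron_graph (complete_graph n) (cycle_graph N)) (i, j) (i', j') =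
  (if i == i' then same_dist else diff_dist) (cycle_dist N j j').
Proof.
move=> n_gt2 N_even; have jN := ltn_ord j; have j'N := ltn_ord j'.
have c_le := cycle_dist_le jN j'N.
have nN : 3 * N <= n * N := leq_mul n_gt2 (leqnn N).
apply: gdist_eq => [|l|];
  rewrite ?walk_kron ?walk_complete ?walk_cycle ?card_prod ?card_ord //;
  move: c_le; rewrite /same_dist /diff_dist; set c := cycle_dist N j j';
  case: (i == i'); case: (c =P 0) => ?; case: (c =P 1) => ?; lia.
Qed.

Local Open Scope ring_scope.

(* Row-vector convention of [eigenvalue]: x is a left eigenvector of the matrix
   with entries K j' j. *)

Definition kernel_eigenvalue (R : pzSemiRingType) (J : finType) (K : J -> J -> R) (a : R) :=
  exists2 x : J -> R, (exists j, x j != 0) & forall j, \sum_j' x j' * K j' j = a * x j.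

Lemma eigenvalue_kernel (R : fieldType) (T : finType) (K : T -> T -> R) a :
  eigenvalue (\matrix_(i < #|T|, j < #|T|) K (enum_val i) (enum_val j)) a <-> kernel_eigenvalue K a.
Proof.
have reindex_enum (F : T -> R) : \sum_(k < #|T|) F (enum_val k) = \sum_s F s.
  by rewrite (reindex (@enum_val T T)) //; apply/onW_bij/enum_val_bij.
split.
- case/eigenvalueP => v vK /rV0Pn [k vk]; exists (fun s => v 0 (enum_rank s)).
    by exists (enum_val k); rewrite enum_valK.
  move=> s; move/rowP: vK => /(_ (enum_rank s)); rewrite !mxE => <-.
  by rewrite -reindex_enum; apply: eq_bigr => t _; rewrite mxE !enum_valK enum_rankK.
- case=> x [s xs] xK; apply/eigenvalueP; exists (\row_k x (enum_val k)).
    by apply/rowP => k; rewrite !mxE -xK -reindex_enum; apply: eq_bigr => t _; rewrite !mxE.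
  by apply/rV0Pn; exists (enum_rank s); rewrite mxE enum_rankK.
Qed.

Section KronJI.
Variables (R : comPzRingType) (n : nat) (J : finType) (A B : J -> J -> R).

Lemma sum_kernel_JI (f : 'I_n * J -> R) i j :
  \sum_s f s * (A s.2 j + (s.1 == i)%:R * B s.2 j) =
  \sum_j' (\sum_i' f (i', j')) * A j' j + \sum_j' f (i, j') * B j' j.
Proof.
transitivity (\sum_i' \sum_j' (f (i', j') * A j' j + (i' == i)%:R * (f (i', j') * B j' j))).
  by rewrite pair_bigA; apply: eq_bigr => -[i' j'] _ /=; ring.
under eq_bigr do rewrite big_split -mulr_sumr /=.
rewrite big_split /= exchange_big; congr (_ + _).
  by apply: eq_bigr => j' _; rewrite mulr_suml.
rewrite (bigD1 i) //= eqxx mul1r [X in _ + X]big1 ?addr0 // => i' /negbTE ->.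
by rewrite mul0r.
Qed.

Hypothesis n_gt1 : (1 < n)%N.

Lemma kernel_eigenvalue_JI a :
  kernel_eigenvalue (fun s t : 'I_n * J => A s.2 t.2 + (s.1 == t.1)%:R * B s.2 t.2) a <->
  kernel_eigenvalue (fun j' j => n%:R * A j' j + B j' j) a \/ kernel_eigenvalue B a.
Proof.
split.
- case=> f [[i0 j0] f0] fD.
  pose w j := \sum_i f (i, j).
  have fD' i j : \sum_j' w j' * A j' j + \sum_j' f (i, j') * B j' j = a * f (i, j).
    by rewrite -sum_kernel_JI; apply: (fD (i, j)).
  case: (boolP [exists j, w j != 0]) => [/existsP [j1 w1]|].
  + left; exists w; first by exists j1.
    move=> j; rewrite /w mulr_sumr -(eq_bigr _ (fun i _ => fD' i j)) big_split /=.
    rewrite sumr_const card_ord -sumrMnl exchange_big /= -big_split /=.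
    by apply: eq_bigr => j' _; rewrite -mulr_suml /w; ring.
  + rewrite negb_exists => /forallP w0.
    right; exists (fun j => f (i0, j)); first by exists j0.
    move=> j; rewrite -fD' [X in _ = X + _]big1 ?add0r // => j' _.
    by have /negPn/eqP -> := w0 j'; rewrite mul0r.
- case=> -[x [j0 x0] xK].
  + exists (fun s => x s.2); first by exists (Ordinal (ltnW n_gt1), j0).
    case=> i j; rewrite sum_kernel_JI -xK -big_split /=.
    by apply: eq_bigr => j' _; rewrite sumr_const card_ord -mulr_natl; ring.
  + pose i0 : 'I_n := Ordinal (ltnW n_gt1); pose i1 : 'I_n := Ordinal n_gt1.
    pose c (i : 'I_n) : R := (i == i0)%:R - (i == i1)%:R.
    have sum_delta (k : 'I_n) : \sum_i (i == k)%:R = 1 :> R.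
      by rewrite (bigD1 k) //= eqxx big1 ?addr0 // => i /negbTE ->.
    have c_sum0 : \sum_i c i = 0 by rewrite sumrB !sum_delta subrr.
    exists (fun s => c s.1 * x s.2); first by exists (i0, j0); rewrite /c eqxx /= subr0 mul1r.
    case=> i j; rewrite sum_kernel_JI /= [X in X + _]big1 ?add0r => [|j' _]; last first.
      by rewrite -mulr_suml c_sum0 !mul0r.
    under eq_bigr do rewrite -mulrA.
    by rewrite -mulr_sumr xK mulrCA.
Qed.

End KronJI.

Lemma sin_half_sum_cos (R : realType) (t : R) M :
  2 * sin (t / 2) * \sum_(r < M) cos (r%:R * t) = sin (M%:R * t - t / 2) + sin (t / 2).
Proof.
elim: M => [|M IH]; first by rewrite big_ord0 mul0r sub0r sinN mulr0 addNr.
rewrite big_ord_recr /= mulrDr IH.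
have -> : M.+1%:R * t - t / 2 = M%:R * t + t / 2 by rewrite [M.+1%:R]mulrSr; field.
by rewrite !sinD cosN sinN; ring.
Qed.

Lemma sin_pi_frac_gt0 (R : realType) (d M : nat) : (0 < d < M)%N -> 0 < sin (pi * d%:R / M%:R) :> R.
Proof.
move=> /andP[d_gt0 dM]; apply: sin_gt0_pi; have pi_gt0 := @pi_gt0 R.
have M_gt0 : 0 < M%:R :> R by rewrite ltr0n; lia.
apply/andP; split; first by rewrite divr_gt0 // mulr_gt0 // ltr0n.
by rewrite ltr_pdivrMr // ltr_pM2l // ltr_nat.
Qed.

Lemma sum_ord_delta (R : pzSemiRingType) n i (F : nat -> R) : (i < n)%N ->
  \sum_(k < n) (k == i :> nat)%:R * F k = F i.
Proof.
by move=> i_lt; under eq_bigr do rewrite mulr_natl mulrb; rewrite -big_mkcond big_ord1_eq i_lt.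
Qed.

Section Circulant.
Variables (R : realType) (N : nat).
Hypothesis N_gt0 : (0 < N)%N.

Let N_neq0 : N%:R != 0 :> R. Proof. by rewrite pnatr_eq0 -lt0n. Qed.

Definition circ_angle (r k : nat) : R := pi *+ 2 * r%:R * k%:R / N%:R.

Definition circ_eigenvalue (g : nat -> R) (r : nat) : R :=
  \sum_(k < N) g (cycle_dist N k 0) * cos (circ_angle r k).

Lemma circ_angleD r k l : circ_angle r (k + l) = circ_angle r k + circ_angle r l.
Proof. by rewrite /circ_angle natrD; field. Qed.

Lemma circ_angle_mulN r q : circ_angle r (q * N) = pi *+ 2 *+ (r * q).
Proof. by rewrite /circ_angle -mulr_natr !natrM; field. Qed.

Lemma cos_circ_angle_mod r k phi :
  cos (circ_angle r (k %% N) + phi) = cos (circ_angle r k + phi).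
Proof.
by rewrite {2}(divn_eq k N) addnC circ_angleD circ_angle_mulN addrAC (periodicn (@cosD2pi R)).
Qed.

Lemma sin_circ_angle_mod r k : sin (circ_angle r (k %% N)) = sin (circ_angle r k).
Proof.
by rewrite {2}(divn_eq k N) addnC circ_angleD circ_angle_mulN (periodicn (@sinD2pi R)).
Qed.

Lemma circ_angle_opp r k : (k <= N)%N -> circ_angle r (N - k) = pi *+ 2 *+ r - circ_angle r k.
Proof. by move=> kN; rewrite /circ_angle natrB // -mulr_natr; field. Qed.

Lemma cos_circ_angle_opp r k : (k <= N)%N -> cos (circ_angle r (N - k)) = cos (circ_angle r k).
Proof. by move=> kN; rewrite circ_angle_opp // addrC (periodicn (@cosD2pi R)) cosN. Qed.

Definition cyc_add (j k : 'I_N) : 'I_N := Ordinal (ltn_pmod (j + k) N_gt0).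
Definition cyc_opp (k : 'I_N) : 'I_N := Ordinal (ltn_pmod (N - k) N_gt0).

Lemma cyc_add_inj j : injective (cyc_add j).
Proof.
move=> k l /(congr1 val) /= /eqP; rewrite eqn_modDl !modn_small // => /eqP.
exact: val_inj.
Qed.

Lemma cyc_oppK : involutive cyc_opp.
Proof.
move=> k; apply: val_inj => /=; have kN := ltn_ord k.
case: (posnP k) => [->|k_gt0]; first by rewrite subn0 modnn subn0 modnn.
by rewrite (@modn_small (N - k)) ?subKn ?modn_small //; lia.
Qed.

Lemma sum_sin_circ_angle g r :
  \sum_(k < N) g (cycle_dist N k 0) * sin (circ_angle r k) = 0.
Proof.
set S := LHS; suff : S = - S by lra.
rewrite {1}/S (reindex_inj (can_inj cyc_oppK)) -sumrN; apply: eq_bigr => k _ /=.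
rewrite cycle_dist_opp sin_circ_angle_mod circ_angle_opp 1?ltnW //.
by rewrite addrC (periodicn (@sinD2pi R)) sinN mulrN.
Qed.

Lemma circulant_cos g r phi (j : 'I_N) :
  \sum_(j' < N) cos (circ_angle r j' + phi) * g (cycle_dist N j' j) =
  circ_eigenvalue g r * cos (circ_angle r j + phi).
Proof.
rewrite (reindex_inj (@cyc_add_inj j)) /=.
under eq_bigr do rewrite cycle_dist_add cos_circ_angle_mod circ_angleD addrAC cosD mulrBl.
rewrite sumrB [X in _ - X](eq_bigr (fun k : 'I_N => sin (circ_angle r j + phi) *
   (g (cycle_dist N k 0) * sin (circ_angle r k)))) => [|k _]; last by ring.
rewrite -mulr_sumr sum_sin_circ_angle mulr0 subr0 /circ_eigenvalue mulr_suml.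
by apply: eq_bigr => k _; ring.
Qed.

Lemma circ_eigenvector g r (j : 'I_N) :
  \sum_(j' < N) cos (circ_angle r j') * g (cycle_dist N j' j) =
  circ_eigenvalue g r * cos (circ_angle r j).
Proof. by have := circulant_cos g r 0 j; under eq_bigr do rewrite addr0; rewrite addr0. Qed.

Lemma sum_cos_circ_angle_lt (l j : 'I_N) : (j < l)%N ->
  \sum_(r < N) cos (circ_angle r l - circ_angle r j) = 0.
Proof.
move=> jl; set t := circ_angle 1 (l - j).
have -> : \sum_(r < N) cos (circ_angle r l - circ_angle r j) = \sum_(r < N) cos (r%:R * t).
  by apply: eq_bigr => r _; congr cos; rewrite /t /circ_angle natrB 1?ltnW //; field.
have sin_gt0 : 0 < sin (t / 2).
  have -> : t / 2 = pi * (l - j)%:R / N%:R by rewrite /t /circ_angle -mulr_natr; field.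
  by apply: sin_pi_frac_gt0; have := ltn_ord l; lia.
have : 2 * sin (t / 2) * \sum_(r < N) cos (r%:R * t) = 0.
  have Nt : N%:R * t = pi *+ 2 *+ (l - j) by rewrite /t /circ_angle -mulr_natr; field.
  by rewrite sin_half_sum_cos Nt [pi *+ 2 *+ _ - _]addrC (periodicn (@sinD2pi R)) sinN addNr.
by move/eqP; rewrite !mulf_eq0 pnatr_eq0 /= (gt_eqF sin_gt0) => /eqP.
Qed.

Lemma sum_cos_circ_angleB (l j : 'I_N) :
  \sum_(r < N) cos (circ_angle r l - circ_angle r j) = if l == j then N%:R else 0.
Proof.
case: eqP => [->|/eqP l_neq_j].
  by under eq_bigr do rewrite subrr cos0; rewrite sumr_const card_ord.
case: (ltngtP l j) => [lj|jl|/val_inj lj]; last by rewrite lj eqxx in l_neq_j.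
  by under eq_bigr do rewrite -cosN opprB; apply: sum_cos_circ_angle_lt.
exact: sum_cos_circ_angle_lt.
Qed.

Lemma circ_fourier_inversion (x : 'I_N -> R) (j : 'I_N) :
  \sum_(r < N) ((\sum_l x l * cos (circ_angle r l)) * cos (circ_angle r j) +
                (\sum_l x l * sin (circ_angle r l)) * sin (circ_angle r j)) =
  N%:R * x j.
Proof.
under eq_bigr do rewrite !mulr_suml -big_split /=.
rewrite exchange_big /=.
under eq_bigr do under eq_bigr do rewrite -!mulrA -mulrDr -cosB.
under eq_bigr do rewrite -mulr_sumr sum_cos_circ_angleB.
rewrite (bigD1 j) //= eqxx big1 ?addr0 1?mulrC // => l /negbTE ->.
exact: mulr0.
Qed.

Lemma circ_eigenfun_orth g (x : 'I_N -> R) a r phi :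
  (forall j : 'I_N, \sum_j' x j' * g (cycle_dist N j' j) = a * x j) ->
  a != circ_eigenvalue g r ->
  \sum_j x j * cos (circ_angle r j + phi) = 0.
Proof.
move=> xK a_neq; set S := LHS.
have : a * S = circ_eigenvalue g r * S.
  rewrite /S mulr_sumr.
  transitivity (\sum_(j < N) (\sum_j' x j' * g (cycle_dist N j' j)) * cos (circ_angle r j + phi)).
    by apply: eq_bigr => j _; rewrite xK mulrA.
  under eq_bigr do rewrite mulr_suml.
  rewrite exchange_big /= mulr_sumr; apply: eq_bigr => j' _.
  rewrite mulrCA -circulant_cos mulr_sumr; apply: eq_bigr => j _.
  by rewrite cycle_distC; ring.
by move/eqP; rewrite -subr_eq0 -mulrBl mulf_eq0 subr_eq0 (negbTE a_neq) => /eqP.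
Qed.

Lemma kernel_eigenvalue_circulant g a :
  kernel_eigenvalue (fun j' j : 'I_N => g (cycle_dist N j' j)) a <->
  exists2 r, (r < N)%N & a = circ_eigenvalue g r.
Proof.
split => [[x [j0 xj0] xK]|[r rN ->]]; last first.
  exists (fun j : 'I_N => cos (circ_angle r j)).
    by exists (Ordinal N_gt0); rewrite /circ_angle mulr0 mul0r cos0 oner_neq0.
  exact: circ_eigenvector.
case: (boolP [exists r : 'I_N, a == circ_eigenvalue g r]) => [/existsP [r /eqP ->]|].
  by exists r.
(* Otherwise x is orthogonal to every Fourier mode, so x = 0 by Fourier inversion. *)
rewrite negb_exists => /forallP a_neq; exfalso; move/negP: xj0; apply.
have : N%:R * x j0 = 0.
  rewrite -circ_fourier_inversion big1 // => r _.
  have := circ_eigenfun_orth 0 xK (a_neq r); under eq_bigr do rewrite addr0; move->.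
  have := circ_eigenfun_orth (- (pi / 2)) xK (a_neq r).
  by under eq_bigr do rewrite cosBpihalf; move->; rewrite !mul0r addr0.
by move/eqP; rewrite mulf_eq0 (negbTE N_neq0).
Qed.

Lemma eq_circ_eigenvalue g1 g2 r : g1 =1 g2 -> circ_eigenvalue g1 r = circ_eigenvalue g2 r.
Proof. by move=> g12; apply: eq_bigr => k _; rewrite g12. Qed.

Lemma circ_eigenvalue_lin c1 c2 g1 g2 r :
  circ_eigenvalue (fun d => c1 * g1 d + c2 * g2 d) r =
  c1 * circ_eigenvalue g1 r + c2 * circ_eigenvalue g2 r.
Proof. by rewrite /circ_eigenvalue !mulr_sumr -big_split; apply: eq_bigr => k _ /=; ring. Qed.

Lemma circ_eigenvalue_delta0 r : circ_eigenvalue (fun d => (d == 0)%:R) r = 1.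
Proof.
rewrite /circ_eigenvalue.
under eq_bigr => k _ do rewrite (cycle_dist_eq0 (ltn_ord k) N_gt0).
by rewrite (sum_ord_delta (fun k => cos (circ_angle r k))) // /circ_angle mulr0 mul0r cos0.
Qed.

Lemma circ_eigenvalue_delta1 r : (2 < N)%N ->
  circ_eigenvalue (fun d => (d == 1)%:R) r = 2 * cos (circ_angle r 1).
Proof.
move=> N_gt2; rewrite /circ_eigenvalue.
transitivity (\sum_(k < N) ((k == 1 :> nat)%:R * cos (circ_angle r k) +
                             (k == N.-1 :> nat)%:R * cos (circ_angle r k))).
  apply: eq_bigr => k _; rewrite -mulrDl -natrD; congr (_%:R * _).
  by have := ltn_ord k; rewrite /cycle_dist; case: eqP; case: eqP; case: eqP => /=; lia.
rewrite big_split /= !(sum_ord_delta (fun k => cos (circ_angle r k))) -?subn1 ?cos_circ_angle_opp;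
  [ring | lia..].
Qed.

End Circulant.

Lemma cos_pimulrn (R : realType) r : cos (pi *+ r) = (-1) ^+ r :> R.
Proof. by rewrite -[pi *+ r]add0r (alternatingn (@cosDpi R)) cos0 mulr1. Qed.

Section EvenCycleDistanceSpectrum.
Variables (R : realType) (m : nat).
Hypothesis m_gt0 : (0 < m)%N.
Local Notation N := (2 * m)%N.
Local Notation angle := (circ_angle R N).
Local Notation Delta := (circ_eigenvalue N (fun d => d%:R : R)).

Let N_gt0 : (0 < N)%N. Proof. by rewrite muln_gt0. Qed.

Lemma sum_cycle_dist : (\sum_(k < N) cycle_dist N k 0 = m * m)%N.
Proof.
rewrite -(big_mkord xpredT (fun k => cycle_dist N k 0)) (big_cat_nat (n := m)) /=; [|lia|lia].
have := big_addn 0 N m xpredT (fun k => cycle_dist N k 0); rewrite add0n => ->.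
rewrite (_ : (N - m = m)%N); last by lia.
rewrite -big_split /= (eq_big_nat _ _ (F2 := fun=> m)); first by rewrite sum_nat_const_nat; lia.
by move=> k km; rewrite /cycle_dist; lia.
Qed.

Lemma circ_angle1 r : angle r 1 = r%:R * pi / m%:R.
Proof. by rewrite /circ_angle -mulr_natr natrM; field; rewrite pnatr_eq0 -lt0n. Qed.

Lemma circ_angle_half r : angle r m = pi *+ r.
Proof. by rewrite /circ_angle -mulr_natr natrM; field; rewrite pnatr_eq0 -lt0n. Qed.

Lemma cycle_dist_eigenvalue0 : Delta 0 = (m * m)%:R.
Proof.
rewrite /circ_eigenvalue -sum_cycle_dist natr_sum.
by apply: eq_bigr => k _; rewrite /circ_angle mulr0 !mul0r cos0 mulr1.
Qed.

Lemma cycle_dist_second_diff k : (k < N)%N ->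
  (cycle_dist N k 1)%:R + (cycle_dist N k N.-1)%:R - 2 * (cycle_dist N k 0)%:R =
  2 * ((k == 0)%:R - (k == m)%:R) :> R.
Proof.
move=> kN; have : (cycle_dist N k 1 + cycle_dist N k N.-1 + 2 * (k == m) =
                   2 * cycle_dist N k 0 + 2 * (k == 0))%N.
  by rewrite /cycle_dist; case: eqP; case: eqP; lia.
by move/(congr1 (fun z : nat => z%:R : R)); rewrite !natrD; lra.
Qed.

Lemma cycle_dist_eigenvalue_rel r :
  (2 * cos (angle r 1) - 2) * Delta r = 2 - 2 * (-1) ^+ r.
Proof.
have N_gt1 : (1 < N)%N by lia.
have N1_lt : (N.-1 < N)%N by lia.
have ev (j : 'I_N) := circ_eigenvector N_gt0 (fun d : nat => d%:R : R) r j.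
have ev0 := ev (Ordinal N_gt0); have ev1 := ev (Ordinal N_gt1); have evN := ev (Ordinal N1_lt).
rewrite /= in ev0 ev1 evN.
have E : \sum_(k < N) cos (angle r k) *
           ((cycle_dist N k 1)%:R + (cycle_dist N k N.-1)%:R - 2 * (cycle_dist N k 0)%:R) =
         Delta r * cos (angle r 1) + Delta r * cos (angle r N.-1) - 2 * (Delta r * cos (angle r 0)).
  by rewrite -ev0 -ev1 -evN mulr_sumr -big_split -sumrB /=; apply: eq_bigr => k _; ring.
rewrite (eq_bigr (fun k : 'I_N => 2 * ((k == 0 :> nat)%:R * cos (angle r k)) -
                                  2 * ((k == m :> nat)%:R * cos (angle r k)))) in E; last first.
  by move=> k _; rewrite cycle_dist_second_diff //; ring.
rewrite sumrB -!mulr_sumr !(sum_ord_delta (fun k => cos (angle r k))) // in E; last by lia.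
move: E; rewrite -subn1 (@cos_circ_angle_opp R N N_gt0) ?circ_angle_half ?cos_pimulrn; last by lia.
rewrite /circ_angle mulr0 mul0r cos0; lra.
Qed.

Lemma cos_circ_angle1 r : cos (angle r 1) = 1 - 2 * sin (r%:R * pi / N%:R) ^+ 2.
Proof.
have -> : angle r 1 = (r%:R * pi / N%:R) *+ 2.
  by rewrite /circ_angle !mulr2n; field; rewrite pnatr_eq0 -lt0n.
by rewrite cos_mulr2n cos2sin2; ring.
Qed.

Lemma sin_circ_half_gt0 r : (0 < r < N)%N -> 0 < sin (r%:R * pi / N%:R) :> R.
Proof. by move=> r_bounds; rewrite [r%:R * pi]mulrC; apply: sin_pi_frac_gt0. Qed.

Lemma cycle_dist_eigenvalue_even r : (0 < r < N)%N -> ~~ odd r -> Delta r = 0.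
Proof.
move=> r_bounds r_even; have := cycle_dist_eigenvalue_rel r.
rewrite -signr_odd (negbTE r_even) expr0 cos_circ_angle1.
have s_gt0 : 0 < sin (r%:R * pi / N%:R) ^+ 2 := exprn_gt0 _ (sin_circ_half_gt0 r_bounds).
move=> rel; have : sin (r%:R * pi / N%:R) ^+ 2 * Delta r = 0 by lra.
by move/eqP; rewrite mulf_eq0 gt_eqF //= => /eqP.
Qed.

Lemma cycle_dist_eigenvalue_odd r : (r < N)%N -> odd r ->
  Delta r = - (sin (r%:R * pi / N%:R) ^+ 2)^-1.
Proof.
move=> r_lt r_odd; have := cycle_dist_eigenvalue_rel r.
rewrite -signr_odd r_odd expr1 cos_circ_angle1.
have r_bounds : (0 < r < N)%N.
  by rewrite r_lt andbT lt0n; apply: contraTneq r_odd => ->.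
have s_gt0 : 0 < sin (r%:R * pi / N%:R) ^+ 2 := exprn_gt0 _ (sin_circ_half_gt0 r_bounds).
move=> rel; apply: (mulfI (lt0r_neq0 s_gt0)); rewrite mulrN mulfV ?lt0r_neq0 //; lra.
Qed.

Lemma circ_eigenvalue_diff_dist r :
  circ_eigenvalue N (fun d => (diff_dist d)%:R : R) r = Delta r + 2.
Proof.
transitivity (circ_eigenvalue N (fun d => 1 * d%:R + 2 * (d == 0)%:R : R) r).
  by apply: eq_circ_eigenvalue => -[|d]; rewrite /diff_dist /=; ring.
by rewrite circ_eigenvalue_lin mul1r circ_eigenvalue_delta0 // mulr1.
Qed.

Lemma circ_eigenvalue_same_sub_diff_dist r : (1 < m)%N ->
  circ_eigenvalue N (fun d => (same_dist d)%:R - (diff_dist d)%:R : R) r =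
  4 * cos (r%:R * pi / m%:R) - 2.
Proof.
move=> m_gt1.
transitivity (circ_eigenvalue N (fun d => 2 * (d == 1)%:R + -2 * (d == 0)%:R : R) r).
  by apply: eq_circ_eigenvalue => -[|[|d]]; rewrite /same_dist /diff_dist /=; ring.
rewrite circ_eigenvalue_lin circ_eigenvalue_delta1 ?circ_eigenvalue_delta0 ?circ_angle1 //;
  [ring | lia].
Qed.

End EvenCycleDistanceSpectrum.

Section KronCompleteCycle.
Variables (R : realType) (n m : nat).
Hypotheses (n_gt2 : (2 < n)%N) (m_gt1 : (1 < m)%N).
Local Notation N := (2 * m)%N.
Local Notation Delta := (circ_eigenvalue N (fun d => d%:R : R)).

Let N_gt0 : (0 < N)%N. Proof. lia. Qed.

Local Notation gA := (fun d => (diff_dist d)%:R : R).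
Local Notation gB := (fun d => (same_dist d)%:R - (diff_dist d)%:R : R).
Local Notation gnAB :=
  (fun d => n%:R * (diff_dist d)%:R + ((same_dist d)%:R - (diff_dist d)%:R) : R).

Lemma eigenvalue_kron_complete_cycle a :
  eigenvalue (dist_matrix R (kron_graph (complete_graph n) (cycle_graph N))) a <->
  (exists2 r, (r < N)%N & a = circ_eigenvalue N gnAB r) \/
  (exists2 r, (r < N)%N & a = circ_eigenvalue N gB r).
Proof.
pose A (j' j : 'I_N) := gA (cycle_dist N j' j).
pose B (j' j : 'I_N) := gB (cycle_dist N j' j).
have dist_kernel : (fun s t => (gdist (kron_graph (complete_graph n) (cycle_graph N)) s t)%:R) =
                   (fun s t => A s.2 t.2 + (s.1 == t.1)%:R * B s.2 t.2).
  apply/funext => -[i j]; apply/funext => -[i' j'] /=.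
  by rewrite gdist_kron_complete_cycle ?oddM //; case: (i == i'); rewrite /B /=; ring.
have := kernel_eigenvalue_circulant N_gt0 gnAB a.
have := kernel_eigenvalue_circulant N_gt0 gB a.
rewrite (eigenvalue_kernel (fun s t => (gdist _ s t)%:R)) dist_kernel.
rewrite kernel_eigenvalue_JI; last lia.
tauto.
Qed.

Lemma circ_eigenvalue_nAB r :
  circ_eigenvalue N gnAB r = n%:R * (Delta r + 2) + (4 * cos (r%:R * pi / m%:R) - 2).
Proof.
rewrite -circ_eigenvalue_same_sub_diff_dist -?circ_eigenvalue_diff_dist; try lia.
rewrite -[X in _ = _ + X]mul1r -circ_eigenvalue_lin.
by apply: eq_circ_eigenvalue => d; rewrite mul1r.
Qed.

Lemma circ_eigenvalue_nAB_cases a :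
  (exists2 r, (r < N)%N & a = circ_eigenvalue N gnAB r) <->
     a = 2 * (n%:R + 1) + n%:R * m%:R ^+ 2
  \/ (exists2 p : nat, (1 <= p <= m - 1)%N &
        a = 2 * (n%:R - 1) + 4 * cos ((2 * p)%:R * pi / m%:R))
  \/ (exists2 q : nat, (1 <= q <= m)%N &
        a = 2 * (n%:R - 1) + 4 * cos ((2 * q - 1)%:R * pi / m%:R)
            - n%:R * (sin ((2 * q - 1)%:R * pi / (2 * m)%:R) ^+ 2)^-1).
Proof.
have ev0 : circ_eigenvalue N gnAB 0 = 2 * (n%:R + 1) + n%:R * m%:R ^+ 2.
  by rewrite circ_eigenvalue_nAB cycle_dist_eigenvalue0 ?mul0r ?cos0 ?natrM; [ring | lia].
have ev_even r : (0 < r < N)%N -> ~~ odd r ->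
    circ_eigenvalue N gnAB r = 2 * (n%:R - 1) + 4 * cos (r%:R * pi / m%:R).
  move=> r_bounds r_even.
  by rewrite circ_eigenvalue_nAB cycle_dist_eigenvalue_even //; [ring | lia].
have ev_odd r : (r < N)%N -> odd r -> circ_eigenvalue N gnAB r =
    2 * (n%:R - 1) + 4 * cos (r%:R * pi / m%:R) - n%:R * (sin (r%:R * pi / N%:R) ^+ 2)^-1.
  by move=> r_lt r_odd; rewrite circ_eigenvalue_nAB cycle_dist_eigenvalue_odd //; [ring | lia].
split.
- case=> r r_lt ->; case: (posnP r) => [->|r_gt0]; first by left.
  have := odd_double_half r; case: (boolP (odd r)) => r_odd /= r_eq; right.
    right; exists r./2.+1; first lia.
    by rewrite (_ : (2 * r./2.+1 - 1 = r)%N) ?ev_odd //; lia.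
  left; exists r./2; first lia.
  by rewrite (_ : (2 * r./2 = r)%N) ?ev_even //; lia.
- case=> [->|[[p p_bounds ->]|[q q_bounds ->]]].
  + by exists 0%N; first lia.
  + by exists (2 * p)%N; rewrite ?ev_even ?oddM //; lia.
  + by exists (2 * q - 1)%N; rewrite ?ev_odd //; lia.
Qed.

End KronCompleteCycle.

Local Open Scope classical_set_scope.

Theorem theorem4p1 (R : realType) (n m : nat) (hn : (3 <= n)%N) (hm : (2 <= m)%N) :
  [set a : R | eigenvalue
     (dist_matrix R (kron_graph (complete_graph n) (cycle_graph (2 * m)))) a]
  = [set a : R |
       a = 2 * (n%:R + 1) + n%:R * m%:R ^+ 2
    \/ (exists2 p : nat, (1 <= p <= m - 1)%N &
          a = 2 * (n%:R - 1) + 4 * cos ((2 * p)%:R * pi / m%:R))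
    \/ (exists2 q : nat, (1 <= q <= m)%N &
          a = 2 * (n%:R - 1) + 4 * cos ((2 * q - 1)%:R * pi / m%:R)
              - n%:R * (sin ((2 * q - 1)%:R * pi / (2 * m)%:R) ^+ 2)^-1)
    \/ (exists2 r : nat, (r <= 2 * m - 1)%N &
          a = 4 * cos (pi / m%:R * r%:R) - 2)].
Proof.
have angleC r : pi / m%:R * r%:R = r%:R * pi / m%:R :> R by rewrite mulrC mulrA.
apply/seteqP; split => a /=;
  rewrite (eigenvalue_kron_complete_cycle hn hm) circ_eigenvalue_nAB_cases //.
- case=> [H|[r r_lt ->]]; first tauto.
  right; right; right; exists r; first lia.
  by rewrite angleC circ_eigenvalue_same_sub_diff_dist //; lia.
- case=> [H|[H|[H|[r r_le ->]]]]; try tauto.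
  right; exists r; first lia.
  by rewrite angleC circ_eigenvalue_same_sub_diff_dist //; lia.
Qed.
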